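(* Let $G$ be a connected graph of order at least three. If $\gamma(G-v)\ge \gamma(G)$ for every vertex $v$ that belongs to some $\gamma$-set of $G$, then $\gamma(G)=\gamma_{\rm cer}(G)$.
   Context: All graphs are finite and simple; $G-v$ denotes the graph obtained by deleting vertex $v$. A set $D\subseteq V_G$ is a dominating set of $G$ if every vertex of $V_G-D$ has a neighbor in $D$; $\gamma(G)$ is the minimum cardinality of a dominating set, and a $\gamma$-set is a dominating set of cardinality $\gamma(G)$. A set $D\subseteq V_G$ is a certified dominating set of $G$ if $D$ is a dominating set of $G$ and every vertex of $D$ has either zero or at least two neighbors in $V_G-D$; $\gamma_{\rm cer}(G)$ is the minimum cardinality of a certified dominating set of $G$. *)

(* A simple graph G is given by a finite vertex type T
   with a symmetric irreflexive adjacency relation e. Induced subgraphs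
   (in particular G - v) are handled by restricting to a vertex set V. *)
From mathcomp Require Import all_boot.
Set Implicit Arguments. Unset Strict Implicit. Unset Printing Implicit Defensive.

Section Graphs.
Variable T : finType.
Variable e : rel T.

Definition simple_graph : Prop := symmetric e /\ irreflexive e.

Definition connected_graph : Prop := forall x y : T, connect e x y.

Definition nbhd_in (V : {set T}) (x : T) : {set T} := [set y in V | e x y].

Definition dominating_in (V D : {set T}) : bool :=
  (D \subset V) && [forall x in V :\: D, [exists y in D, e x y]].

(* domination number of G[V]; V itself dominates, so #|V| is an upper bound *)
Definition gamma_in (V : {set T}) : nat :=
  \big[minn/#|V|]_(D : {set T} | dominating_in V D) #|D|.

Definition certified_dominating_in (V D : {set T}) : bool :=
  dominating_in V D &&
  [forall x in D, (#|nbhd_in V x :\: D| == 0) || (2 <= #|nbhd_in V x :\: D|)].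

Definition gamma_cer_in (V : {set T}) : nat :=
  \big[minn/#|V|]_(D : {set T} | certified_dominating_in V D) #|D|.

Definition gamma : nat := gamma_in [set: T].
Definition gamma_cer : nat := gamma_cer_in [set: T].
Definition is_gamma_set (D : {set T}) : bool :=
  dominating_in [set: T] D && (#|D| == gamma).
Definition gamma_del (v : T) : nat := gamma_in [set~ v].

End Graphs.

From mathcomp Require Import all_boot.
Set Implicit Arguments. Unset Strict Implicit. Unset Printing Implicit Defensive.

(* Among the gamma-sets choose one, D, with the fewest vertices having exactly
   one neighbour outside D. If some x in D had a single outer neighbour u, then
   by the hypothesis at x the vertex u has no neighbour in D besides x, so
   D - x + u is again a gamma-set; by the hypothesis at u, x has no neighbour
   in D. Connectivity and order at least 3 give u a neighbour z <> x, so u has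
   the two outer neighbours x and z in D - x + u, while the outer neighbourhoods
   of the other vertices are unchanged: D - x + u has fewer vertices with a
   single outer neighbour than D. Hence D is certified. *)

Lemma bigmin_leq (I : eqType) (r : seq I) (a : nat) (P : pred I) (F : I -> nat) j :
  j \in r -> P j -> \big[minn/a]_(i <- r | P i) F i <= F j.
Proof.
elim: r => // i r IHr; rewrite inE big_cons => /predU1P[<- -> | jr Pj].
  exact: geq_minl.
by case: (P i); rewrite ?geq_min IHr ?orbT.
Qed.

Lemma bigmin_attained (I : finType) (P : pred I) (F : I -> nat) j :
  P j -> exists2 i, P i & F i = \big[minn/F j]_(i | P i) F i.
Proof.
move=> Pj; apply: (big_rec (fun n => exists2 i, P i & F i = n)); first by exists j.
by move=> i n Pi [k Pk <-]; rewrite /minn; case: ltnP => _; [exists i | exists k].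
Qed.

Lemma connected_closed_setT (T : finType) (e : rel T) (A : {set T}) a :
  symmetric e -> connected_graph e -> {in A, forall b c, e b c -> c \in A} ->
  a \in A -> A = setT.
Proof.
move=> e_sym conn clA aA; have closedA : closed e A.
  by move=> c d ecd; apply/idP/idP => /clA; apply; rewrite // e_sym.
by apply/setP => b; rewrite inE -(closed_connect closedA (conn a b)).
Qed.

(* Otherwise {x, u} would be a whole component. *)
Lemma exists_nbhd_other (T : finType) (e : rel T) x u :
  symmetric e -> connected_graph e -> 2 < #|T| ->
  (forall w, e x w -> w = u) -> exists2 z, z != x & e u z.
Proof.
move=> e_sym conn T_gt2 nbhd_x.
case: (pickP [pred z | (z != x) && e u z]) => [z /andP[] | no_z]; first by exists z.
have xuT : [set x; u] = setT.
  apply: connected_closed_setT e_sym conn _ (set21 x u).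
  move=> b /set2P[] -> c ebc; first by rewrite (nbhd_x c ebc) set22.
  by have := no_z c; rewrite /= ebc andbT => /negbFE /eqP ->; apply: set21.
by move: T_gt2; rewrite -cardsT -xuT cards2; case: (x != u).
Qed.

Section Domination.
Variables (T : finType) (e : rel T).

Lemma dominating_in_refl V : dominating_in e V V.
Proof. by rewrite /dominating_in subxx; apply/forall_inP => x; rewrite setDv inE. Qed.

Lemma gamma_in_le_card V D : dominating_in e V D -> gamma_in e V <= #|D|.
Proof. exact: bigmin_leq (mem_index_enum D). Qed.

Lemma exists_gamma_set : exists D, is_gamma_set e D.
Proof.
have [D Ddom cardD] := @bigmin_attained _ _ (fun D : {set T} => #|D|) _ (dominating_in_refl [set: T]).
by exists D; rewrite /is_gamma_set Ddom cardD eqxx.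
Qed.

Lemma gamma_le_gamma_cer : gamma e <= gamma_cer e.
Proof.
apply: (big_rec (fun n => gamma e <= n)); first exact/gamma_in_le_card/dominating_in_refl.
by move=> D n /andP[Ddom _] le_n; rewrite leq_min le_n gamma_in_le_card.
Qed.

Definition outer_nbhd (D : {set T}) x := nbhd_in e [set: T] x :\: D.

Lemma in_outer_nbhd D x y : (y \in outer_nbhd D x) = e x y && (y \notin D).
Proof. by rewrite !inE andbC. Qed.

Definition uncertified (D : {set T}) := [set x in D | #|outer_nbhd D x| == 1].

Lemma uncertified0_certified D :
  dominating_in e [set: T] D -> uncertified D = set0 ->
  certified_dominating_in e [set: T] D.
Proof.
move=> Ddom noU; rewrite /certified_dominating_in Ddom; apply/forall_inP => x xD.
have : x \notin uncertified D by rewrite noU inE.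
by rewrite inE xD /= -/(outer_nbhd D x); case: #|_| => [|[|n]].
Qed.

End Domination.

Section Swap.
Variables (T : finType) (e : rel T).
Hypotheses (e_sym : symmetric e) (e_irr : irreflexive e).
Hypotheses (conn : connected_graph e) (T_gt2 : 2 < #|T|).
Hypothesis gamma_le_gamma_del : forall v : T,
  (exists D : {set T}, is_gamma_set e D /\ v \in D) -> gamma e <= gamma_del e v.

Variables (D : {set T}) (x u : T).
Hypotheses (Dgamma : is_gamma_set e D) (xD : x \in D).
Hypothesis outer_x : outer_nbhd e D x = [set u].

Let D' := u |: D :\ x.

Lemma outer_nbhd_x_eq w : e x w -> w \notin D -> w = u.
Proof. by move=> exw wD; apply/set1P; rewrite -outer_x in_outer_nbhd exw. Qed.

Lemma edge_xu : e x u.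
Proof. by have := set11 u; rewrite -outer_x in_outer_nbhd => /andP[]. Qed.

Lemma u_notin_D : u \notin D.
Proof. by have := set11 u; rewrite -outer_x in_outer_nbhd => /andP[]. Qed.

Lemma x_neq_u : x != u.
Proof. by apply: contraNneq u_notin_D => <-. Qed.

Lemma dominated_off_x w : w \notin D -> w != u -> exists2 y, y \in D :\ x & e w y.
Proof.
move=> wD wu; have /andP[/andP[_ /forall_inP Ddom] _] := Dgamma.
have /exists_inP[y yD ewy] : [exists y in D, e w y] by apply: Ddom; rewrite !inE wD.
exists y => //; rewrite !inE yD andbT; apply: contraNneq wu => yx.
by rewrite (outer_nbhd_x_eq _ wD) // e_sym -yx.
Qed.

Lemma dominating_del_x v :
  v \notin D :\ x ->
  (x != v -> exists2 y, y \in D :\ x & e x y) ->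
  (u != v -> exists2 y, y \in D :\ x & e u y) ->
  dominating_in e [set~ v] (D :\ x).
Proof.
move=> vD domx domu; apply/andP; split.
  by apply/subsetP => y yD; rewrite !inE; apply: contraNneq vD => <-.
apply/forall_inP => w; rewrite !inE => /andP[wD wv]; apply/exists_inP.
have [wx | wx] := eqVneq w x; first by subst w; have [y] := domx wv; exists y.
have [wu | wu] := eqVneq w u; first by subst w; have [y] := domu wv; exists y.
by rewrite wx /= in wD; have [y] := dominated_off_x wD wu; exists y.
Qed.

Lemma not_dominating_del_x v :
  (exists D0, is_gamma_set e D0 /\ v \in D0) -> ~~ dominating_in e [set~ v] (D :\ x).
Proof.
move=> /gamma_le_gamma_del gamma_le; apply/negP => /gamma_in_le_card.
have /andP[_ /eqP cardD] := Dgamma.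
by apply/negP; rewrite -ltnNge (leq_trans _ gamma_le) // -cardD (cardsD1 x D) xD.
Qed.

Lemma nbhd_u_in_D y : y \in D -> e u y -> y = x.
Proof.
move=> yD euy; apply/eqP; apply: contraNT (not_dominating_del_x (ex_intro _ D (conj Dgamma xD))).
move=> yx; apply: dominating_del_x; rewrite ?inE ?eqxx //.
by move=> _; exists y; rewrite // !inE yx.
Qed.

Lemma swap_gamma_set : is_gamma_set e D'.
Proof.
have /andP[_ /eqP cardD] := Dgamma.
rewrite /is_gamma_set /D' cardsU1 -cardD (cardsD1 x D) xD !inE (negbTE u_notin_D) andbF eqxx andbT.
rewrite /dominating_in subsetT; apply/forall_inP => w.
rewrite !inE negb_or andbT => /andP[wu wDx]; apply/exists_inP.
have [wx | wx] := eqVneq w x; first by subst w; exists u; rewrite ?edge_xu // !inE eqxx.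
rewrite wx /= in wDx; have [y yDx ewy] := dominated_off_x wDx wu.
by exists y; rewrite // inE yDx orbT.
Qed.

Lemma nbhd_x_notin_D y : y \in D -> ~~ e x y.
Proof.
move=> yD; apply/negP => exy.
have /negP := not_dominating_del_x (ex_intro _ D' (conj swap_gamma_set (setU11 u _))).
apply; apply: dominating_del_x => //; rewrite ?inE ?eqxx ?(negbTE u_notin_D) ?andbF //.
by move=> _; exists y; rewrite // !inE yD andbT; apply: contraTneq exy => ->; rewrite e_irr.
Qed.

Lemma nbhd_x_eq w : e x w -> w = u.
Proof.
by move=> exw; apply: outer_nbhd_x_eq exw (contraTN (@nbhd_x_notin_D w) exw).
Qed.

Lemma outer_nbhd_swap y : y \in D -> y != x -> outer_nbhd e D' y = outer_nbhd e D y.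
Proof.
move=> yD yx; apply/setP => w; rewrite !in_outer_nbhd !inE.
case eyw: (e y w); rewrite //= negb_or negb_and negbK.
have wu : w != u.
  by apply: contraTneq eyw => ->; rewrite e_sym; apply: contraNN yx => /(nbhd_u_in_D yD) ->.
have wx : w != x by apply: contraTneq eyw => ->; rewrite e_sym nbhd_x_notin_D.
by rewrite wu (negbTE wx).
Qed.

Lemma card_outer_nbhd_swap_u : 2 <= #|outer_nbhd e D' u|.
Proof.
have [z zx euz] := exists_nbhd_other e_sym conn T_gt2 nbhd_x_eq.
have zu : z != u by apply: contraTneq euz => ->; rewrite e_irr.
have zD : z \notin D by apply: contra zx => zD; rewrite (nbhd_u_in_D zD euz).
have : [set x; z] \subset outer_nbhd e D' u.
  apply/subsetP => w /set2P[] ->; rewrite in_outer_nbhd !inE.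
    by rewrite e_sym edge_xu (negbTE x_neq_u) eqxx.
  by rewrite euz (negbTE zu) (negbTE zD) andbF.
by move/subset_leq_card; rewrite cards2 eq_sym zx.
Qed.

Lemma uncertified_swap : uncertified e D' \subset uncertified e D :\ x.
Proof.
apply/subsetP => y; rewrite !inE => /andP[/orP[/eqP yu | /andP[yx yD]] outer1].
  by move: card_outer_nbhd_swap_u; rewrite -yu (eqP outer1).
by rewrite yx yD -(outer_nbhd_swap yD yx).
Qed.

Lemma card_uncertified_swap : #|uncertified e D'| < #|uncertified e D|.
Proof.
have xU : x \in uncertified e D by rewrite inE xD outer_x cards1.
by rewrite (cardsD1 x (uncertified e D)) xU (leq_ltn_trans (subset_leq_card uncertified_swap)).
Qed.

End Swap.

Theorem theorem2p6 (T : finType) (e : rel T) :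
  simple_graph e -> connected_graph e -> 3 <= #|T| ->
  (forall v : T, (exists D : {set T}, is_gamma_set e D /\ v \in D) ->
     gamma e <= gamma_del e v) ->
  gamma e = gamma_cer e.
Proof.
move=> [e_sym e_irr] conn T_gt2 gamma_le_gamma_del.
apply/eqP; rewrite eqn_leq gamma_le_gamma_cer /=.
have [D0 D0gamma] := exists_gamma_set e.
have [D Dgamma Dmin] := arg_minnP (fun D => #|uncertified e D|) D0gamma.
have /andP[Ddom /eqP cardD] := Dgamma.
rewrite -cardD; apply: bigmin_leq (mem_index_enum D) _.
apply: uncertified0_certified => //; apply/setP => x; rewrite !inE.
apply: negbTE; apply/negP => /andP[xD /cards1P[u outer_x]].
have := Dmin _ (swap_gamma_set e_sym Dgamma xD outer_x).
by rewrite leqNgt (card_uncertified_swap e_sym e_irr conn T_gt2 gamma_le_gamma_del).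
Qed.
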